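(* For every $c\in V$, the function $h^c_{YX}:[0,\|c\|_X]\to[0,\|c\|_Y]$ is Lipschitz continuous.
   Context: $V$ is a finite dimensional real vector space with a positive definite symmetric bilinear form $\langle\cdot,\cdot\rangle$ and $\|v\|_2=\sqrt{\langle v,v\rangle}$; $\|\cdot\|_X$ is a norm with dual norm $\|v\|_Y=\max\{\langle v,w\rangle:\|w\|_X=1\}$. For $x\in[0,\|c\|_X]$, $\alpha^c_{2X}(x)$ is the unique minimizer of $\|c-a\|_2$ subject to $\|a\|_X\le x$, and $h^c_{YX}(x)=\|c-\alpha^c_{2X}(x)\|_Y$. *)

From Stdlib Require Fin.
From Stdlib Require Import Reals.
Open Scope R_scope.

(* V = R^n, vectors as functions on Fin.t n; the inner product is an
   ARBITRARY positive definite symmetric bilinear form B (not the dot product). *)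
Definition vec (n : nat) := Fin.t n -> R.
Definition vzero {n} : vec n := fun _ => 0.
Definition vadd {n} (u v : vec n) : vec n := fun i => u i + v i.
Definition vscale {n} (t : R) (v : vec n) : vec n := fun i => t * v i.
Definition vsub {n} (u v : vec n) : vec n := fun i => u i - v i.

Definition is_inner {n} (B : vec n -> vec n -> R) : Prop :=
  (forall u v, B u v = B v u) /\
  (forall u v w, B (vadd u v) w = B u w + B v w) /\
  (forall t u v, B (vscale t u) v = t * B u v) /\
  (forall v, v <> vzero -> 0 < B v v).

Definition norm2 {n} (B : vec n -> vec n -> R) (v : vec n) : R := sqrt (B v v).

Definition is_norm {n} (N : vec n -> R) : Prop :=
  (forall v, N v = 0 -> v = vzero) /\
  (forall t v, N (vscale t v) = Rabs t * N v) /\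
  (forall u v, N (vadd u v) <= N u + N v).

Definition is_dual_norm {n} (B : vec n -> vec n -> R) (NX NY : vec n -> R) : Prop :=
  forall v, (exists w, NX w = 1 /\ B v w = NY v) /\
            (forall w, NX w = 1 -> B v w <= NY v).

Definition is_alpha {n} (B : vec n -> vec n -> R) (NX : vec n -> R)
  (c : vec n) (x : R) (a : vec n) : Prop :=
  NX a <= x /\ forall b, NX b <= x -> norm2 B (vsub c a) <= norm2 B (vsub c b).

(* The residual r_x := c - alpha(x) satisfies <r_x, alpha(x)> = x ||r_x||_Y: the inequality
   <= is duality, and >= comes from the variational inequality of the nearest-point
   projection onto the ball {||a||_X <= x}, tested against x w where w attains ||r_x||_Y.
   Combining this identity at x and y with the duality bounds <r_x, alpha(y)> <= y ||r_x||_Y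
   gives ||r_x - r_y||_2^2 <= (y - x)(||r_x||_Y - ||r_y||_Y). Since V is finite dimensional
   there is M with ||.||_Y <= M ||.||_2 (expand in a B-orthonormal basis), so
   | ||r_x||_Y - ||r_y||_Y | <= M ||r_x - r_y||_2 <= M^2 |x - y|. *)
From Stdlib Require Import Reals Lra Psatz List FinFun Classical FunctionalExtensionality.
Open Scope R_scope.

Ltac vext := apply functional_extensionality; intro; unfold vadd, vsub, vscale, vzero.

Section InnerProduct.
Context {n : nat} {B : vec n -> vec n -> R}.
Hypothesis HB : is_inner B.

Lemma inner_sym u v : B u v = B v u.
Proof. apply HB. Qed.

Lemma inner_addl u v w : B (vadd u v) w = B u w + B v w.
Proof. apply HB. Qed.

Lemma inner_scalel t u v : B (vscale t u) v = t * B u v.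
Proof. apply HB. Qed.

Lemma inner_addr u v w : B w (vadd u v) = B w u + B w v.
Proof. rewrite !(inner_sym w); apply inner_addl. Qed.

Lemma inner_scaler t u v : B v (vscale t u) = t * B v u.
Proof. rewrite !(inner_sym v); apply inner_scalel. Qed.

Lemma inner_0l w : B vzero w = 0.
Proof.
  replace (@vzero n) with (vscale 0 (@vzero n)) by (vext; ring).
  rewrite inner_scalel; ring.
Qed.

Lemma inner_0r w : B w vzero = 0.
Proof. rewrite inner_sym; apply inner_0l. Qed.

Lemma inner_subl u v w : B (vsub u v) w = B u w - B v w.
Proof.
  replace (vsub u v) with (vadd u (vscale (-1) v)) by (vext; ring).
  rewrite inner_addl, inner_scalel; ring.
Qed.

Lemma inner_subr u v w : B w (vsub u v) = B w u - B w v.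
Proof. rewrite !(inner_sym w); apply inner_subl. Qed.

Lemma inner_self_ge0 v : 0 <= B v v.
Proof.
  destruct (classic (v = vzero)) as [-> | Hv].
  - rewrite inner_0l; lra.
  - apply Rlt_le, HB, Hv.
Qed.

Lemma inner_self_addZ u v t :
  B (vadd u (vscale t v)) (vadd u (vscale t v)) = B u u + 2 * t * B u v + t * t * B v v.
Proof.
  rewrite inner_addl, !inner_addr, !inner_scalel, !inner_scaler, (inner_sym v u); ring.
Qed.

Lemma norm2_sq v : norm2 B v * norm2 B v = B v v.
Proof. apply sqrt_sqrt, inner_self_ge0. Qed.

Lemma norm2_le_sq u v : norm2 B u <= norm2 B v -> B u u <= B v v.
Proof. intro H; apply sqrt_le_0; try apply inner_self_ge0; exact H. Qed.

Lemma norm2_subC u v : norm2 B (vsub u v) = norm2 B (vsub v u).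
Proof.
  unfold norm2; f_equal.
  replace (vsub u v) with (vscale (-1) (vsub v u)) by (vext; ring).
  rewrite inner_scalel, inner_scaler; ring.
Qed.

Lemma Cauchy_Schwarz u v : Rabs (B u v) <= norm2 B u * norm2 B v.
Proof.
  assert (Hsq : B u v * B u v <= B u u * B v v).
  { destruct (classic (v = vzero)) as [-> | Hv].
    - rewrite inner_0r, inner_0l; lra.
    - assert (Hvv : 0 < B v v) by (apply HB, Hv).
      (* expand 0 <= |u - t v|^2 at the minimizing t = <u,v> / <v,v> *)
      pose proof (inner_self_ge0 (vadd u (vscale (- (B u v / B v v)) v))) as H.
      rewrite inner_self_addZ in H.
      apply (Rmult_le_compat_r (B v v)) in H; [|lra].
      replace ((B u u + 2 * - (B u v / B v v) * B u v
                + - (B u v / B v v) * - (B u v / B v v) * B v v) * B v v)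
        with (B u u * B v v - B u v * B u v) in H by (field; lra).
      lra. }
  unfold norm2; rewrite <- sqrt_mult by apply inner_self_ge0.
  rewrite <- sqrt_Rsqr_abs; apply sqrt_le_1_alt; unfold Rsqr; lra.
Qed.

Definition convex (K : vec n -> Prop) : Prop :=
  forall a b t, K a -> K b -> 0 <= t <= 1 -> K (vadd (vscale (1 - t) a) (vscale t b)).

Lemma nearest_point_variational (K : vec n -> Prop) c a :
  convex K -> K a -> (forall b, K b -> norm2 B (vsub c a) <= norm2 B (vsub c b)) ->
  forall b, K b -> B (vsub c a) (vsub b a) <= 0.
Proof.
  intros HK Ha Hmin b Hb.
  set (r := vsub c a); set (d := vsub b a).
  pose proof (inner_self_ge0 d) as Hq.
  destruct (Rle_or_lt (B r d) 0) as [|Hp]; [assumption | exfalso].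
  set (t := B r d / (B r d + B d d)).
  assert (Ht : t * (B r d + B d d) = B r d) by (unfold t; field; lra).
  assert (Ht0 : 0 < t) by (unfold t; apply Rdiv_lt_0_compat; lra).
  assert (Ht1 : t <= 1) by nra.
  pose proof (Hmin _ (HK a b t Ha Hb (conj (Rlt_le _ _ Ht0) Ht1))) as Hm.
  replace (vsub c (vadd (vscale (1 - t) a) (vscale t b))) with (vadd r (vscale (- t) d))
    in Hm by (unfold r, d; vext; ring).
  apply norm2_le_sq in Hm; rewrite inner_self_addZ in Hm; fold r in Hm.
  clearbody r d t.
  assert (2 * B r d <= t * B d d) by (apply (Rmult_le_reg_l t); nra).
  nra.
Qed.

End InnerProduct.

Section Norms.
Variable n : nat.
Variable B : vec n -> vec n -> R.
Variables NX NY : vec n -> R.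
Hypothesis HB : is_inner B.
Hypothesis HX : is_norm NX.
Hypothesis HY : is_dual_norm B NX NY.

Lemma normZ t v : NX (vscale t v) = Rabs t * NX v.
Proof. apply HX. Qed.

Lemma normN v : NX (vscale (-1) v) = NX v.
Proof. rewrite normZ, Rabs_left; lra. Qed.

Lemma norm_ge0 v : 0 <= NX v.
Proof.
  pose proof (proj2 (proj2 HX) v (vscale (-1) v)) as H.
  replace (vadd v (vscale (-1) v)) with (@vscale n 0 v) in H by (vext; ring).
  rewrite normN, normZ, Rabs_R0 in H; lra.
Qed.

Lemma norm_ball_convex x : convex (fun a => NX a <= x).
Proof.
  intros a b t Ha Hb Ht.
  eapply Rle_trans; [apply HX|].
  rewrite !normZ, !Rabs_right by lra; nra.
Qed.

Lemma dual_abs_le v w : NX w = 1 -> Rabs (B v w) <= NY v.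
Proof.
  intro Hw; apply Rabs_le; split; [|now apply HY].
  assert (Hw' : NX (vscale (-1) w) = 1) by (rewrite normN; trivial).
  pose proof (proj2 (HY v) _ Hw') as H; rewrite inner_scaler in H; trivial; lra.
Qed.

Lemma dual_ge0 v : 0 <= NY v.
Proof.
  destruct (proj1 (HY v)) as [w [Hw _]].
  eapply Rle_trans; [apply Rabs_pos | exact (dual_abs_le v w Hw)].
Qed.

Lemma inner_le_dual r a x : NX a <= x -> B r a <= x * NY r.
Proof.
  intro Ha; pose proof (dual_ge0 r).
  destruct (Req_dec (NX a) 0) as [Ha0 | Ha0].
  - rewrite (proj1 HX a Ha0), inner_0r by trivial; nra.
  - pose proof (norm_ge0 a).
    set (w := vscale (/ NX a) a).
    assert (Hw : NX w = 1).
    { unfold w; rewrite normZ, Rabs_right; [field; lra|].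
      apply Rle_ge, Rlt_le, Rinv_0_lt_compat; lra. }
    replace a with (vscale (NX a) w) by (unfold w; vext; field; lra).
    rewrite inner_scaler by trivial.
    pose proof (proj2 (HY r) w Hw); nra.
Qed.

Lemma dual_sub_le u v : NY u - NY v <= NY (vsub u v).
Proof.
  destruct (proj1 (HY u)) as [w [Hw Hu]].
  replace u with (vadd (vsub u v) v) in Hu at 1 by (vext; ring).
  rewrite inner_addl in Hu by trivial.
  pose proof (proj2 (HY (vsub u v)) w Hw); pose proof (proj2 (HY v) w Hw); lra.
Qed.

Lemma alpha_inner_residual c x a :
  0 <= x -> is_alpha B NX c x a -> B (vsub c a) a = x * NY (vsub c a).
Proof.
  intros Hx [Ha Hmin]; apply Rle_antisym; [now apply inner_le_dual|].
  destruct (proj1 (HY (vsub c a))) as [w [Hw Hr]].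
  assert (Hxw : NX (vscale x w) <= x) by (rewrite normZ, Hw, Rabs_right; lra).
  pose proof (nearest_point_variational HB _ c a (norm_ball_convex x) Ha Hmin _ Hxw) as H.
  rewrite inner_subr, inner_scaler, Hr in H by trivial; lra.
Qed.

Lemma residual_sq_le c x y a b :
  0 <= x -> 0 <= y -> is_alpha B NX c x a -> is_alpha B NX c y b ->
  B (vsub (vsub c a) (vsub c b)) (vsub (vsub c a) (vsub c b))
    <= (y - x) * (NY (vsub c a) - NY (vsub c b)).
Proof.
  intros Hx Hy Ha Hb.
  pose proof (alpha_inner_residual c x a Hx Ha).
  pose proof (alpha_inner_residual c y b Hy Hb).
  pose proof (inner_le_dual (vsub c a) b y (proj1 Hb)).
  pose proof (inner_le_dual (vsub c b) a x (proj1 Ha)).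
  replace (vsub (vsub c a) (vsub c b)) with (vsub b a) at 2 by (vext; ring).
  rewrite inner_subl, !inner_subr by trivial; lra.
Qed.

End Norms.

Section Orthonormal.
Variable n : nat.
Variable B : vec n -> vec n -> R.
Hypothesis HB : is_inner B.

Definition proj (fs : list (vec n)) (v : vec n) : vec n :=
  fold_right (fun f acc => vadd (vscale (B v f) f) acc) vzero fs.

(* [reproducing fs] says that [proj fs] is the orthogonal projection onto the span of
   [fs]; it holds for B-orthonormal lists and is the invariant of Gram-Schmidt. *)
Definition reproducing (fs : list (vec n)) : Prop :=
  (forall f, In f fs -> B f f = 1) /\ (forall v g, In g fs -> B (proj fs v) g = B v g).

Lemma proj_add fs u v : proj fs (vadd u v) = vadd (proj fs u) (proj fs v).
Proof.
  induction fs as [|f fs IH]; simpl; [vext; ring|].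
  rewrite IH, inner_addl by trivial; vext; ring.
Qed.

Lemma proj_scale fs t u : proj fs (vscale t u) = vscale t (proj fs u).
Proof.
  induction fs as [|f fs IH]; simpl; [vext; ring|].
  rewrite IH, inner_scalel by trivial; vext; ring.
Qed.

Lemma proj_orthogonal fs v g : (forall f, In f fs -> B f g = 0) -> B (proj fs v) g = 0.
Proof.
  induction fs as [|f fs IH]; simpl; intro Hg; [now apply inner_0l|].
  rewrite inner_addl, inner_scalel, Hg, IH by auto; ring.
Qed.

Lemma inner_proj_le NX NY (HX : is_norm NX) (HY : is_dual_norm B NX NY) fs v w :
  (forall f, In f fs -> B f f = 1) -> NX w = 1 ->
  B (proj fs v) w <= norm2 B v * fold_right (fun f acc => NY f + acc) 0 fs.
Proof.
  intros Hfs Hw; induction fs as [|f fs IH]; simpl.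
  - rewrite inner_0l by trivial; lra.
  - rewrite inner_addl, inner_scalel, Rmult_plus_distr_l by trivial.
    apply Rplus_le_compat; [|apply IH; intros; apply Hfs; simpl; auto].
    eapply Rle_trans; [apply Rle_abs|]; rewrite Rabs_mult.
    apply Rmult_le_compat; try apply Rabs_pos; [|now apply (dual_abs_le n B NX NY)].
    eapply Rle_trans; [apply Cauchy_Schwarz; trivial|].
    unfold norm2 at 2; rewrite (Hfs f (or_introl eq_refl)), sqrt_1; lra.
Qed.

Lemma gram_schmidt_step fs u : reproducing fs ->
  exists fs', reproducing fs' /\ proj fs' u = u /\
              (forall v, proj fs v = v -> proj fs' v = v).
Proof.
  intros [Hunit Hrep].
  set (u' := vsub u (proj fs u)).
  destruct (classic (u' = vzero)) as [Hu0 | Hu0].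
  { exists fs; repeat split; auto.
    vext; pose proof (f_equal (fun z => z x) Hu0) as E; unfold u', vsub, vzero in E; lra. }
  set (s := norm2 B u').
  assert (Hs : 0 < s) by (apply sqrt_lt_R0, HB, Hu0).
  pose proof (norm2_sq HB u') as Hss; fold s in Hss.
  set (g := vscale (/ s) u').
  assert (Hfg : forall f, In f fs -> B f g = 0).
  { intros f Hf; unfold g, u'; rewrite inner_scaler, inner_subr, !(inner_sym HB f), Hrep
      by trivial; ring. }
  assert (Hgg : B g g = 1) by (unfold g; rewrite inner_scalel, inner_scaler, <- Hss by trivial;
                               field; lra).
  exists (g :: fs); split; [split|split].
  - intros f [<- | Hf]; auto.
  - intros v h Hh; simpl; rewrite inner_addl, inner_scalel by trivial.
    destruct Hh as [<- | Hh].
    + rewrite Hgg, proj_orthogonal by trivial; ring.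
    + rewrite Hrep, (inner_sym HB g h), (Hfg h Hh) by trivial; ring.
  - assert (Hug : B u g = s).
    { replace u with (vadd u' (proj fs u)) at 1 by (unfold u'; vext; ring).
      rewrite inner_addl, (proj_orthogonal fs u g Hfg) by trivial.
      unfold g; rewrite inner_scaler, <- Hss by trivial; field; lra. }
    simpl; rewrite Hug; unfold g, u'; vext; field; lra.
  - intros v Hv; simpl.
    assert (Hvg : B v g = 0) by (rewrite <- Hv; apply proj_orthogonal; trivial).
    rewrite Hvg, Hv; vext; ring.
Qed.

Lemma gram_schmidt (l : list (vec n)) :
  exists fs, reproducing fs /\ forall u, In u l -> proj fs u = u.
Proof.
  induction l as [|u l [fs [Hfs Hl]]].
  - exists nil; split; [split|]; simpl; tauto.
  - destruct (gram_schmidt_step fs u Hfs) as [fs' [Hfs' [Hu Hold]]].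
    exists fs'; split; [trivial|]; intros v [<- | Hv]; auto.
Qed.

Definition ebasis (i : Fin.t n) : vec n := fun j => if Fin.eq_dec i j then 1 else 0.

Definition expand (v : vec n) (l : list (Fin.t n)) : vec n :=
  fold_right (fun i acc => vadd (vscale (v i) (ebasis i)) acc) vzero l.

Lemma expand_notin v l j : ~ In j l -> expand v l j = 0.
Proof.
  induction l as [|i l IH]; simpl; intro Hj; [reflexivity|].
  unfold vadd, vscale, ebasis; fold (expand v l).
  destruct (Fin.eq_dec i j) as [-> | _]; [tauto|].
  rewrite IH by tauto; ring.
Qed.

Lemma expand_listing v l : Listing l -> expand v l = v.
Proof.
  intros [Hnd Hfull]; vext; rename x into j.
  pose proof (Hfull j) as Hj; clear Hfull.
  induction Hnd as [|i l Hi Hnd IH]; simpl in *; [tauto|].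
  unfold vadd, vscale, ebasis; fold (expand v l).
  destruct (Fin.eq_dec i j) as [-> | Hij].
  - rewrite expand_notin by trivial; ring.
  - rewrite IH by (destruct Hj; congruence); ring.
Qed.

Lemma proj_expand fs v l :
  (forall i, In i l -> proj fs (ebasis i) = ebasis i) -> proj fs (expand v l) = expand v l.
Proof.
  induction l as [|i l IH]; simpl; intro Hl.
  - replace (@vzero n) with (vscale 0 (@vzero n)) by (vext; ring).
    rewrite proj_scale; vext; ring.
  - rewrite proj_add, proj_scale, Hl, IH by auto; reflexivity.
Qed.

Lemma orthonormal_basis : exists fs, reproducing fs /\ forall v, proj fs v = v.
Proof.
  assert (Hdec : ListDec.decidable_eq (Fin.t n))
    by (intros i j; destruct (Fin.eq_dec i j); [left | right]; trivial).
  destruct (proj1 Finite_dec (conj (Fin_Finite n) Hdec)) as [l Hl].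
  destruct (gram_schmidt (map ebasis l)) as [fs [Hfs Hbasis]].
  exists fs; split; [trivial|]; intro v.
  rewrite <- (expand_listing v l Hl); apply proj_expand.
  intros i Hi; apply Hbasis, in_map, Hi.
Qed.

Lemma dual_le_norm2 NX NY (HX : is_norm NX) (HY : is_dual_norm B NX NY) :
  exists M, 0 <= M /\ forall v, NY v <= M * norm2 B v.
Proof.
  destruct orthonormal_basis as [fs [[Hunit _] Hfix]].
  exists (fold_right (fun f acc => NY f + acc) 0 fs); split.
  - clear Hunit Hfix; induction fs as [|f fs IH]; simpl; [lra|].
    pose proof (dual_ge0 n B NX NY HB HX HY f); lra.
  - intro v; destruct (proj1 (HY v)) as [w [Hw <-]].
    rewrite <- (Hfix v) at 1; rewrite Rmult_comm.
    now apply (inner_proj_le NX NY).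
Qed.

End Orthonormal.

Lemma Rabs_le_sq_bound (D s t M : R) :
  0 <= s -> 0 <= t -> Rabs D <= M * s -> s * s <= t * Rabs D -> Rabs D <= M * M * t.
Proof.
  intros Hs Ht HD Hss; pose proof (Rabs_pos D).
  destruct (Req_dec s 0) as [-> | Hs0]; [nra|].
  assert (s <= M * t) by (apply (Rmult_le_reg_r s); nra).
  nra.
Qed.

Theorem mainTheorem9 (n : nat) (B : vec n -> vec n -> R) (NX NY : vec n -> R)
  (HB : is_inner B) (HX : is_norm NX) (HY : is_dual_norm B NX NY)
  (c : vec n) (alpha : R -> vec n)
  (Halpha : forall x, 0 <= x <= NX c -> is_alpha B NX c x (alpha x)) :
  exists L : R, 0 <= L /\
    forall x y, 0 <= x <= NX c -> 0 <= y <= NX c ->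
      Rabs (NY (vsub c (alpha x)) - NY (vsub c (alpha y))) <= L * Rabs (x - y).
Proof.
  destruct (dual_le_norm2 n B HB NX NY HX HY) as [M [HM0 HM]].
  exists (M * M); split; [nra|]; intros x y Hx Hy.
  set (rx := vsub c (alpha x)); set (ry := vsub c (alpha y)).
  apply (Rabs_le_sq_bound _ (norm2 B (vsub rx ry))); [apply sqrt_pos | apply Rabs_pos | |].
  - pose proof (dual_sub_le n B NX NY HB HY rx ry).
    pose proof (dual_sub_le n B NX NY HB HY ry rx).
    pose proof (HM (vsub rx ry)); pose proof (HM (vsub ry rx)).
    rewrite (norm2_subC HB ry rx) in *; apply Rabs_le; lra.
  - rewrite (norm2_sq HB), (Rabs_minus_sym x y), <- Rabs_mult.
    eapply Rle_trans; [|apply Rle_abs].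
    apply (residual_sq_le n B NX NY HB HX HY); try apply Halpha; lra.
Qed.
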